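(* Let $\mathcal{S}\subseteq\mathcal{P}_{fin}(\mathbb{N})$ be an IP set, $r\geq1$, and $c:NU(\mathcal{S})\rightarrow[1,r]$ a coloring. Then there are a finite collection $\mathcal{B}\subseteq\mathcal{S}$ and an IP set $\mathcal{T}\subseteq\mathcal{S}-\mathcal{B}$ such that $\mathcal{B}$ half-matches $\mathcal{T}$.
   Context: $\mathcal{P}_{fin}(\mathbb{N})$ is the set of finite subsets of $\mathbb{N}$. For $\mathcal{S}\subseteq\mathcal{P}_{fin}(\mathbb{N})$, $NU(\mathcal{S})$ denotes the set of non-empty sets which are unions of finitely many elements of $\mathcal{S}$. A set $\mathcal{S}\subseteq\mathcal{P}_{fin}(\mathbb{N})$ is an IP set if it is closed under finite unions and contains an infinite family of pairwise disjoint elements. For $B\in\mathcal{S}$, $\mathcal{S}-B:=\{T\in\mathcal{S}: T\cap B=\emptyset\}$, and for $\mathcal{B}\subseteq\mathcal{S}$, $\mathcal{S}-\mathcal{B}:=\bigcap_{B\in\mathcal{B}}(\mathcal{S}-B)$. Relative to a coloring $c$: a family $\mathcal{D}$ half-matches a set $B$ if there is $D\in\mathcal{D}$ with $c(B)=c(D\cup B)$; $\mathcal{D}$ half-matches a family $\mathcal{B}$ if it half-matches every $B\in\mathcal{B}$. *)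

From mathcomp Require Import all_boot.
Set Implicit Arguments. Unset Strict Implicit. Unset Printing Implicit Defensive.

Definition nset := nat -> bool.

Definition fin_set (A : nset) : Prop := exists n, forall x, A x -> x < n.

Definition nfamily := nset -> Prop.

Definition setU (A B : nset) : nset := fun x => A x || B x.

Definition disj (A B : nset) : Prop := forall x, ~~ (A x && B x).

Definition fin_family (S : nfamily) : Prop := forall A, S A -> fin_set A.

(* IP set: closed under (binary, hence finite non-empty) unions and contains
   an infinite nfamily of pairwise disjoint elements (given as an injective
   sequence f of pairwise disjoint members). *)
Definition IP_set (S : nfamily) : Prop :=
  fin_family S /\
  (forall A B, S A -> S B -> S (setU A B)) /\
  exists f : nat -> nset,
    (forall n, S (f n)) /\
    (forall m n, f m = f n -> m = n) /\
    (forall m n, m <> n -> disj (f m) (f n)).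

Definition NU (S : nfamily) (A : nset) : Prop :=
  (exists x, A x) /\
  exists (n : nat) (g : nat -> nset),
    (forall i, i < n -> S (g i)) /\
    (forall x, A x = has (fun i => g i x) (iota 0 n)).

(* A finite collection B of elements of S, given as B = {g 0, ..., g (n-1)}. *)
Definition fin_coll_in (S : nfamily) (n : nat) (g : nat -> nset) : Prop :=
  forall i, i < n -> S (g i).

Definition subfam_minus (T S : nfamily) (n : nat) (g : nat -> nset) : Prop :=
  forall A, T A -> S A /\ forall i, i < n -> disj A (g i).

Definition half_matches (c : nset -> nat) (n : nat) (g : nat -> nset)
  (T : nfamily) : Prop :=
  forall B, T B -> exists2 i, i < n & c B = c (setU (g i) B).

(* The proof goes through Hindman's theorem, via idempotent ultrafilters.
   1. Ultrafilters on a semigroup (T, op) form a semigroup under [usum]; by Zorn's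
      lemma and compactness every nonempty closed subsemigroup contains an idempotent
      (Ellis-Numakura, [idempotent_exists]).
   2. On (nat, +) there is an idempotent p containing all positive multiples of every
      2 ^ k; the Galvin-Glazer construction then gives, in any p-large set, all finite
      sums of a sequence x whose terms have pairwise disjoint binary digits
      ([galvin_glazer]).
   3. From S we extract disjoint nonempty sets D i, and a natural number m codes the
      union of the D i over the binary digits i of m.  Colouring codes by c and taking
      a p-large colour class, all unions coded by finite sums of x get the same colour;
      B is the single union coded by x 0, and T the unions coded by the finite sums
      avoiding x 0 ([tail_blocks_IP], [tail_blocks_minus], [tail_blocks_half]). *)

From mathcomp Require Import all_boot boolp classical_sets filter.
Set Implicit Arguments. Unset Strict Implicit. Unset Printing Implicit Defensive.
Local Open Scope classical_set_scope.

Section Ultrafilters.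
Variable T : Type.
Implicit Types (p q : set_system T) (A B : set T).

Lemma proper_notC p A : ProperFilter p -> p A -> ~ p (~` A).
Proof.
move=> pF pA pnA; have : p (A `&` ~` A) by exact: filterI.
by rewrite setICr => /(filter_not_empty p).
Qed.

Lemma ultraP p : ProperFilter p -> (forall A, p A \/ p (~` A)) -> UltraFilter p.
Proof.
move=> pF pdec; split=> // G GF pG; apply/seteqP; split=> // A GA.
have [//|/pG GnA] := pdec A.
by case: (proper_notC GF GA GnA).
Qed.

Lemma ultra_extend (G : set_system T) :
  G setT -> setI_closed G -> (forall A, G A -> A !=set0) ->
  exists2 p, UltraFilter p & G `<=` p.
Proof.
move=> GT GI Gne.
have GF : ProperFilter (filter_from G id).
  apply: filter_from_proper => //; apply: filter_from_filter; first by exists setT.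
  by move=> A B GA GB; exists (A `&` B) => //; exact: GI.
have [p [pU Gp]] := ultraFilterLemma GF.
by exists p => // A GA; apply: Gp; exists A.
Qed.

Lemma ultra_pigeonhole p (R : nat -> set T) K :
  UltraFilter p -> p [set x | exists2 k, k < K & R k x] -> exists2 k, k < K & p (R k).
Proof.
move=> pU; elim: K => [|K IH] pR.
  by have [x [k]] := filter_ex pR.
have [pRK|pnRK] := in_ultra_setVsetC (R K) pU; first by exists K.
have [|k kK pRk] := IH.
  apply: filterS (filterI pR pnRK) => x [[k]]; rewrite ltnS leq_eqVlt.
  by case/orP => [/eqP -> //|kK Rkx _]; exists k.
by exists k => //; exact: ltnW.
Qed.

End Ultrafilters.

Section UltrafilterSemigroup.
Variables (T : Type) (op : T -> T -> T).
Hypothesis opA : associative op.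
Implicit Types (p q r : set_system T) (A B : set T) (K M : set (set_system T)).

Definition shifts q A : set T := [set x | q [set y | A (op x y)]].

(* The extension of [op] to ultrafilters (the semigroup of the Stone-Cech
   compactification): A is (p + q)-large iff {x | A - x is q-large} is p-large. *)
Definition usum p q : set_system T := [set A | p (shifts q A)].

Lemma usum_ultra p q : UltraFilter p -> UltraFilter q -> UltraFilter (usum p q).
Proof.
move=> pU qU; apply: ultraP; first apply: Build_ProperFilter_ex.
- move=> A pqA; have [x qAx] := filter_ex (F:=p) pqA.
  have [y Axy] := filter_ex (F:=q) qAx.
  by exists (op x y).
- split.
  + by rewrite /usum /=; apply: filterS filterT => x _; exact: filterT.
  + rewrite /usum => A B /= pA pB.
    by apply: filterS (filterI pA pB) => x [qA qB]; exact: filterI.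
  + rewrite /usum => A B AB /=.
    by apply: filterS => x; apply: filterS => y; exact: AB.
- move=> A; have [|pnA] := in_ultra_setVsetC (shifts q A) pU; first by left.
  right; apply: filterS pnA => x nqA.
  by have [//|] := in_ultra_setVsetC [set y | A (op x y)] qU.
Qed.

Lemma usumA p q r : usum (usum p q) r = usum p (usum q r).
Proof.
apply/funext => A; congr (p _); apply/funext => x; congr (q _).
by apply/funext => y; congr (r _); apply/funext => z; rewrite /= opA.
Qed.

(* A family K of ultrafilters is closed in the Stone topology: every ultrafilter
   containing all the sets common to the members of K belongs to K. *)
Definition stone_closed K :=
  forall q, UltraFilter q -> (forall A, (forall r, K r -> r A) -> q A) -> K q.

Record closed_subsemigroup K : Prop := {
  css_ultra : forall q, K q -> UltraFilter q;
  css_closed : stone_closed K;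
  css_usum : forall q r, K q -> K r -> K (usum q r) }.

Lemma bigcap_css (C : set (set (set_system T))) :
  C !=set0 -> (forall K, C K -> closed_subsemigroup K) ->
  closed_subsemigroup (\bigcap_(K in C) K).
Proof.
move=> [K0 CK0] Ccss; split.
- by move=> q /(_ K0 CK0); exact: (css_ultra (Ccss _ CK0)).
- move=> q qU qcommon K CK; apply: (css_closed (Ccss _ CK)) => // A KA.
  by apply: qcommon => r /(_ K CK); exact: KA.
- by move=> q r Cq Cr K CK; apply: (css_usum (Ccss _ CK)); [exact: Cq|exact: Cr].
Qed.

Lemma bigcap_chain_nonempty (C : set (set (set_system T))) :
  C !=set0 -> (forall K, C K -> closed_subsemigroup K /\ K !=set0) ->
  total_on C subset -> \bigcap_(K in C) K !=set0.
Proof.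
move=> [K0 CK0] Ccss Ctot.
pose G := [set A | exists2 K, C K & forall r, K r -> r A].
have [q qU Gq] : exists2 q, UltraFilter q & G `<=` q.
  apply: ultra_extend.
  - by exists K0 => // r /(css_ultra (Ccss _ CK0).1) rU; exact: filterT.
  - move=> A B [K CK KA] [L CL LB]; have [KL|LK] := Ctot _ _ CK CL.
      exists K => // r Kr; have rU := css_ultra (Ccss _ CK).1 Kr.
      by apply: filterI; [exact: KA|apply: LB; exact: KL].
    exists L => // r Lr; have rU := css_ultra (Ccss _ CL).1 Lr.
    by apply: filterI; [apply: KA; exact: LK|exact: LB].
  - move=> A [K CK KA]; have [r Kr] := (Ccss _ CK).2.
    have rU := css_ultra (Ccss _ CK).1 Kr; exact: filter_ex (KA r Kr).
exists q => K CK; apply: (css_closed (Ccss _ CK).1) => // A KA.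
by apply: Gq; exists K.
Qed.

Lemma minimal_css K0 : closed_subsemigroup K0 -> K0 !=set0 ->
  exists M, [/\ closed_subsemigroup M, M !=set0, M `<=` K0 &
    forall K, closed_subsemigroup K -> K !=set0 -> K `<=` M -> M `<=` K].
Proof.
move=> css0 ne0.
pose X := {K | [/\ closed_subsemigroup K, K !=set0 & K `<=` K0]}.
pose R (a b : X) := `[< proj1_sig b `<=` proj1_sig a >].
have [|||t tmax] := @ZL_preorder X (exist _ K0 (And3 css0 ne0 (@subset_refl _ K0))) R.
- by move=> a; apply/asboolP.
- by move=> a b c /asboolP ba /asboolP cb; apply/asboolP; exact: subset_trans ba.
- move=> A Atot.
  pose C := [set K | K = K0 \/ exists2 a, A a & proj1_sig a = K].
  have Cprop K : C K -> [/\ closed_subsemigroup K, K !=set0 & K `<=` K0].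
    by case=> [->|[a _ <-]]; [split|exact: proj2_sig a].
  have Cne : C !=set0 by exists K0; left.
  have Ccss K (CK : C K) : closed_subsemigroup K by case: (Cprop K CK).
  have Ctot : total_on C subset.
    move=> K L [->|[a Aa <-]] [->|[b Ab <-]]; [by left| |by left; case: (proj2_sig a)|].
      by right; case: (proj2_sig b).
    by case: (Atot a b Aa Ab) => /asboolP; [right|left].
  have capK0 : \bigcap_(K in C) K `<=` K0 by move=> q /(_ K0 (or_introl erefl)).
  have capne : \bigcap_(K in C) K !=set0.
    by apply: bigcap_chain_nonempty => // K CK; case: (Cprop K CK).
  pose bound := And3 (bigcap_css Cne Ccss) capne capK0.
  exists (exist _ (\bigcap_(K in C) K) bound : X) => a Aa.
  by apply/asboolP => q /(_ (proj1_sig a)); apply; right; exists a.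
case: t tmax => M [cssM neM MK0] Mmax; exists M; split=> // K cssK neK KM.
pose s : X := exist _ K (And3 cssK neK (subset_trans KM MK0)).
by have /asboolP := Mmax s (asboolT KM).
Qed.

(* Right translation [r |-> r + p] maps a closed family M onto a closed family
   (continuity of the translation and compactness of M). *)
Lemma closed_image_usum M p : closed_subsemigroup M -> UltraFilter p ->
  stone_closed [set usum r p | r in M].
Proof.
move=> cssM pU q qU qcommon.
have meet Z A : (forall r, M r -> r Z) -> q A -> Z `&` shifts p A !=set0.
  move=> Zc qA; apply: contrapT => nomeet; apply: (proper_notC _ qA).
  apply: qcommon => _ [r Mr <-]; have rU := css_ultra cssM Mr.
  have [rA|] := in_ultra_setVsetC (shifts p A) rU.
    by case: nomeet; apply: (filter_ex (F:=r)); apply: filterI => //; exact: Zc.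
  apply: filterS => x nAx.
  by have [pA|//] := in_ultra_setVsetC [set y | A (op x y)] pU; case: nAx.
pose G := [set B | exists Z A,
  [/\ forall r, M r -> r Z, q A & Z `&` shifts p A `<=` B]].
have [r rU Gr] : exists2 r, UltraFilter r & G `<=` r.
  apply: ultra_extend.
  - exists setT, setT; split=> //; last exact: filterT.
    by move=> r /(css_ultra cssM) rU; exact: filterT.
  - move=> B B' [Z [A [Zc qA sB]]] [Z' [A1 [Z'c qA1 sB']]].
    exists (Z `&` Z'), (A `&` A1); split.
    + move=> r Mr; have rU := css_ultra cssM Mr.
      by apply: filterI; [exact: Zc|exact: Z'c].
    + exact: filterI.
    + move=> x [[Zx Z'x] pAA1].
      by split; [apply: sB|apply: sB']; split=> //; apply: filterS pAA1 => y [].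
  - by move=> B [Z [A [Zc qA sB]]]; have [x ZAx] := meet Z A Zc qA; exists x; exact: sB.
have Mr : M r.
  apply: (css_closed cssM) => // A MA; apply: (Gr); exists A, setT.
  by split=> //; exact: filterT.
exists r => //; have rpU := usum_ultra rU pU.
apply: max_filter => A qA; apply: (Gr); exists setT, A; split=> //.
by move=> s /(css_ultra cssM) sU; exact: filterT.
Qed.

Lemma closed_stabilizer M p : stone_closed M -> (forall q, M q -> UltraFilter q) ->
  UltraFilter p -> stone_closed [set q | M q /\ usum q p = p].
Proof.
move=> Mclosed Multra pU q qU qcommon; split.
  by apply: Mclosed => // A MA; apply: qcommon => r [Mr _]; exact: MA.
have qpU := usum_ultra qU pU.
by apply: max_filter => A pA; apply: qcommon => r [_ rp]; rewrite -rp in pA.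
Qed.

Definition ultra_containing (E : set (set T)) : set (set_system T) :=
  [set q | UltraFilter q /\ E `<=` q].

Lemma ultra_containing_css (E : set (set T)) :
  (forall B, E B -> forall x y, B x -> B y -> B (op x y)) ->
  closed_subsemigroup (ultra_containing E).
Proof.
move=> Eop; split.
- by move=> q [].
- by move=> q qU qcommon; split=> // B EB; apply: qcommon => r [_]; exact.
- move=> q r [qU Eq] [rU Er]; split; first exact: usum_ultra.
  move=> B EB; apply: filterS (Eq B EB) => x Bx; rewrite /shifts /=.
  by apply: (@filterS _ r _ B) (Er B EB) => y; exact: Eop.
Qed.

Lemma ultra_containing_nonempty (E : set (set T)) : E !=set0 ->
  (forall B C, E B -> E C -> exists2 D, E D & D `<=` B `&` C) ->
  (forall B, E B -> B !=set0) -> ultra_containing E !=set0.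
Proof.
move=> [B0 EB0] Edir Ene.
have [q qU Gq] : exists2 q, UltraFilter q & [set A | exists2 B, E B & B `<=` A] `<=` q.
  apply: ultra_extend.
  - by exists B0.
  - move=> A A' [B EB BA] [C EC CA']; have [D ED DBC] := Edir _ _ EB EC.
    by exists D => // x /DBC [/BA ? /CA'].
  - by move=> A [B /Ene [x Bx] BA]; exists x; exact: BA.
by exists q; split=> // B EB; apply: Gq; exists B.
Qed.

(* Take p in a minimal M; then M + p = M gives r + p = p with r in M, and the
   stabilizer {q in M | q + p = p} is then all of M, so p + p = p. *)
Theorem idempotent_exists K : closed_subsemigroup K -> K !=set0 ->
  exists2 p, K p & usum p p = p.
Proof.
move=> cssK neK; have [M [cssM [p Mp] MK Mmin]] := minimal_css cssK neK.
have pU := css_ultra cssM Mp.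
(* M + p is a nonempty closed subsemigroup of M, hence contains p. *)
have [r Mr rp] : [set usum r p | r in M] p.
  apply: (Mmin _ _ _ _ p Mp).
  - split.
    + by move=> _ [r Mr <-]; exact: usum_ultra (css_ultra cssM Mr) pU.
    + exact: closed_image_usum.
    + move=> _ _ [r Mr <-] [s Ms <-]; exists (usum (usum r p) s); last by rewrite usumA.
      by apply: (css_usum cssM) => //; exact: (css_usum cssM).
  - by exists (usum p p), p.
  - by move=> _ [r Mr <-]; exact: (css_usum cssM).
(* The stabilizer of p in M contains r, hence is all of M. *)
have [_ pp] : [set q | M q /\ usum q p = p] p.
  apply: (Mmin _ _ _ _ p Mp).
  - split.
    + by move=> q [Mq _]; exact: (css_ultra cssM).
    + apply: closed_stabilizer => //; first exact: (css_closed cssM).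
      exact: (css_ultra cssM).
    + by move=> q s [Mq qp] [Ms sp]; split; [exact: (css_usum cssM)|rewrite usumA sp].
  - by exists r.
  - by move=> q [].
by exists p => //; exact: MK.
Qed.

End UltrafilterSemigroup.

Definition multiples (k : nat) : set nat := [set x | 0 < x /\ 2 ^ k %| x].

Lemma idempotent_multiples : exists p, [/\ UltraFilter p,
  (forall k, p (multiples k)) & usum addn p p = p].
Proof.
pose H := ultra_containing (range multiples).
have cssH : closed_subsemigroup addn H.
  apply: ultra_containing_css => _ [k _ <-] x y [x0 kx] [_ ky].
  by split; [rewrite addn_gt0 x0|exact: dvdn_add].
have neH : H !=set0.
  apply: ultra_containing_nonempty.
  - by exists (multiples 0), 0.
  - move=> _ _ [k _ <-] [l _ <-]; exists (multiples (maxn k l)); first by exists (maxn k l).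
    move=> x [x0 kl]; split; split=> //; apply: dvdn_trans kl; rewrite dvdn_Pexp2l //.
      by rewrite leq_maxl.
    by rewrite leq_maxr.
  - by move=> _ [k _ <-]; exists (2 ^ k); split; rewrite ?expn_gt0.
have [p [pU Ep] pp] := idempotent_exists addnA cssH neH.
by exists p; split=> // k; apply: Ep; exists k.
Qed.

Section GalvinGlazer.
Variable p : set_system nat.
Hypotheses (pU : UltraFilter p) (p_mult : forall k, p (multiples k)).
Hypothesis p_idem : usum addn p p = p.
Implicit Types (A B : set nat).

Definition star B : set nat := B `&` shifts addn p B.

(* Since p is idempotent, B* is p-large whenever B is. *)
Lemma p_star B : p B -> p (star B).
Proof. by move=> pB; apply: filterI => //; rewrite -p_idem in pB. Qed.

Lemma star_mono B C : B `<=` C -> star B `<=` star C.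
Proof. by move=> BC x [Bx pBx]; split; [exact: BC|apply: filterS pBx => y; exact: BC]. Qed.

Lemma star_shift B x : star B x -> p [set y | star B (x + y)].
Proof.
move=> [_ pBx]; apply: filterS (p_star pBx) => y [Bxy pBxy]; split=> //.
by apply: filterS pBxy => z; rewrite /= addnA.
Qed.

Definition gg_pick B s : nat := xget 0 (star B `&` multiples s).

Lemma gg_pickP B s : p B -> (star B `&` multiples s) (gg_pick B s).
Proof.
move=> pB; apply: xgetPex; apply: (filter_ex (F:=p)).
by apply: filterI; [exact: p_star|exact: p_mult].
Qed.

Section Construction.
Variable A : set nat.
Hypothesis pA : p A.

Definition gg_step (st : set nat * nat) : set nat * nat :=
  let: (B, s) := st in
  let x := gg_pick B s in ([set y | star B y /\ star B (x + y)], s + x).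

Definition gg_state n := iter n gg_step (A, 0).
Definition gg_set n := (gg_state n).1.
Definition gg_x n := gg_pick (gg_set n) (gg_state n).2.

Lemma gg_stateS n : gg_state n.+1 =
  ([set y | star (gg_set n) y /\ star (gg_set n) (gg_x n + y)], (gg_state n).2 + gg_x n).
Proof. by rewrite /gg_x /gg_set /=; case: (gg_state n). Qed.

Lemma gg_setS n :
  gg_set n.+1 = [set y | star (gg_set n) y /\ star (gg_set n) (gg_x n + y)].
Proof. by rewrite /gg_set gg_stateS. Qed.

Lemma gg_prefix_sum n : (gg_state n).2 = \sum_(0 <= m < n) gg_x m.
Proof.
elim: n => [|n IH]; first by rewrite big_geq.
by rewrite big_nat_recr // -IH gg_stateS.
Qed.

Lemma gg_large n :
  p (gg_set n) /\ (star (gg_set n) `&` multiples (gg_state n).2) (gg_x n).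
Proof.
suff pB : p (gg_set n) by split=> //; exact: gg_pickP.
elim: n => [//|n IH]; rewrite gg_setS; apply: filterI; first exact: p_star.
by apply: star_shift; case: (gg_pickP (gg_state n).2 IH).
Qed.

Lemma gg_set_dec n : gg_set n.+1 `<=` gg_set n.
Proof. by rewrite gg_setS => y [[]]. Qed.

Lemma gg_star_sums (P : pred nat) d m : has P (index_iota m (m + d)) ->
  star (gg_set m) (\sum_(m <= n < m + d | P n) gg_x n).
Proof.
elim: d m => [|d IH] m; first by rewrite addn0 /index_iota subnn.
have -> : index_iota m (m + d.+1) = m :: index_iota m.+1 (m.+1 + d).
  by rewrite /index_iota !addKn.
rewrite big_cons /=.
case Pm: (P m) => /= hasP; last exact: (star_mono (@gg_set_dec m) (IH _ hasP)).
have [_ [xstar _]] := gg_large m.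
case hasR: (has P (index_iota m.+1 (m.+1 + d))).
  by have := IH _ hasR; rewrite gg_setS => -[[_]].
by rewrite big_hasC ?hasR ?addn0.
Qed.

Theorem galvin_glazer : exists x : nat -> nat, [/\ forall n, 0 < x n,
  forall n, 2 ^ (\sum_(0 <= m < n) x m) %| x n &
  forall N (P : pred nat), has P (iota 0 N) -> A (\sum_(0 <= n < N | P n) x n)].
Proof.
exists gg_x; split.
- by move=> n; have [_ [_ []]] := gg_large n.
- by move=> n; rewrite -gg_prefix_sum; have [_ [_ []]] := gg_large n.
- move=> N P hasP; have := @gg_star_sums P N 0.
  by rewrite add0n /index_iota subn0 => /(_ hasP) [].
Qed.

End Construction.
End GalvinGlazer.

Definition bit (i m : nat) : bool := odd (m %/ 2 ^ i).

Lemma bit_small i k a : a < 2 ^ k -> k <= i -> bit i a = false.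
Proof.
move=> ak ki; rewrite /bit divn_small //; apply: leq_trans ak _.
by rewrite leq_exp2l.
Qed.

Lemma bit_bound i m : bit i m -> i < m.
Proof. by apply: contraLR; rewrite -leqNgt => /(bit_small (ltn_expl m (ltnSn 1))) ->. Qed.

Lemma bit_pos m : 0 < m -> exists i, bit i m.
Proof.
elim/ltn_ind: m => m IH m0; case m_odd: (odd m); first by exists 0; rewrite /bit divn1.
have m2 : m = m %/ 2 * 2 by rewrite {1}(divn_eq m 2) modn2 m_odd addn0.
have half_lt : m %/ 2 < m by rewrite ltn_Pdiv.
have half_pos : 0 < m %/ 2 by move: m0; rewrite {1}m2 muln_gt0 andbT.
have [i bi] := IH _ half_lt half_pos.
by exists i.+1; rewrite /bit expnS divnMA.
Qed.

Lemma bit_mul_pow2 i k q : i < k -> bit i (q * 2 ^ k) = false.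
Proof.
move=> ik; rewrite /bit -(subnK (ltnW ik)) expnD mulnA mulnK ?expn_gt0 //.
by rewrite oddM oddX subn_eq0 leqNgt ik andbF.
Qed.

Lemma bit_add i k a b : a < 2 ^ k -> 2 ^ k %| b -> bit i (a + b) = bit i a || bit i b.
Proof.
move=> ak /dvdnP [q ->]; have [ik|ki] := ltnP i k.
  rewrite bit_mul_pow2 // orbF /bit -(subnK (ltnW ik)) expnD mulnA addnC.
  rewrite divnMDl ?expn_gt0 //.
  by rewrite oddD oddM oddX subn_eq0 leqNgt ik andbF addFb.
rewrite (bit_small ak ki) /= /bit -(subnKC ki) expnD divnMA addnC.
rewrite divnMDl ?expn_gt0 //.
by rewrite (divn_small ak) addn0 divnMA mulnK ?expn_gt0.
Qed.

Lemma bits_disjoint i k a b : a < 2 ^ k -> 2 ^ k %| b -> ~~ (bit i a && bit i b).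
Proof.
move=> ak /dvdnP [q ->]; have [ik|ki] := ltnP i k; first by rewrite bit_mul_pow2 ?andbF.
by rewrite (bit_small ak ki).
Qed.

Section SeparatedSums.
Variable x : nat -> nat.
Hypothesis x_sep : forall n, 2 ^ (\sum_(0 <= m < n) x m) %| x n.

Definition subsum N (P : pred nat) := \sum_(0 <= n < N | P n) x n.

Lemma subsum_lt N P : subsum N P < 2 ^ (\sum_(0 <= n < N) x n).
Proof.
apply: leq_ltn_trans (ltn_expl _ (ltnSn 1)).
by rewrite /subsum big_mkcond; apply: leq_sum => n _; case: (P n).
Qed.

Lemma bit_subsum j N P :
  bit j (subsum N P) = has (fun n => P n && bit j (x n)) (iota 0 N).
Proof.
elim: N => [|N IH]; first by rewrite /subsum big_geq // /bit div0n.
rewrite /subsum big_mkcond big_nat_recr // -big_mkcond -/(subsum N P).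
rewrite -[N.+1]addn1 iotaD has_cat /= orbF -IH.
rewrite add0n; case: (P N); last by rewrite addn0 orbF.
exact: bit_add (subsum_lt N P) (x_sep N).
Qed.

Lemma bit_sep m n j : m < n -> ~~ (bit j (x m) && bit j (x n)).
Proof.
move=> mn; apply: (@bits_disjoint j _ _ _ _ (x_sep n)).
apply: leq_ltn_trans (ltn_expl _ (ltnSn 1)).
by rewrite (bigD1_seq m) ?mem_index_iota ?leq_addr //= /index_iota iota_uniq.
Qed.

End SeparatedSums.

Lemma union_seq_in (S : nfamily) (F : nat -> nset) (s : seq nat) :
  (forall A B, S A -> S B -> S (setU A B)) -> (forall i, S (F i)) ->
  s != [::] -> S (fun z => has (F^~ z) s).
Proof.
move=> SU FS; elim: s => // i [_ _|j s IH _]; last exact: SU (FS i) (IH isT).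
suff -> : (fun z => has (F^~ z) [:: i]) = F i by [].
by apply: funext => z /=; rewrite orbF.
Qed.

(* An IP set contains a sequence of nonempty pairwise disjoint sets: pair the
   injective disjoint sequence, at most one of whose members is empty. *)
Lemma ip_nonempty_disjoint (S : nfamily) : IP_set S ->
  exists D : nat -> nset, [/\ forall n, S (D n), forall n, exists z, D n z &
    forall m n, m <> n -> disj (D m) (D n)].
Proof.
move=> [_ [SU [f [fS [finj fdisj]]]]].
exists (fun n => setU (f n.*2) (f n.*2.+1)); split.
- by move=> n; apply: SU.
- move=> n; apply: contrapT => no_elt.
  have /finj/(congr1 odd) : f n.*2 = f n.*2.+1.
    apply/funext => z; have : ~ setU (f n.*2) (f n.*2.+1) z.
      by move=> Dz; apply: no_elt; exists z.
    by rewrite /setU; case: (f n.*2 z); case: (f n.*2.+1 z).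
  by rewrite /= odd_double.
- move=> m n mn z; apply/negP => /andP[/orP Dm /orP Dn].
  have key a b : a./2 = m -> b./2 = n -> f a z -> f b z -> False.
    move=> am bn fa fb; have ab : a <> b by move=> e; apply: mn; rewrite -am -bn e.
    by have := fdisj a b ab z; rewrite fa fb.
  by case: Dm => fm; case: Dn => fn; apply: (key _ _ _ _ fm fn);
    rewrite /= ?uphalf_double ?doubleK.
Qed.

(* Finite unions of a disjoint sequence D coded by natural numbers: m codes the union
   of the D i for the binary digits i of m. *)
Section FiniteUnions.
Variable D : nat -> nset.
Hypothesis D_ne : forall i, exists z, D i z.
Hypothesis D_disj : forall i j, i <> j -> disj (D i) (D j).

Definition bits (m : nat) : seq nat := [seq i <- iota 0 m | bit i m].

Definition digit_union (m : nat) : nset := fun z => has (D^~ z) (bits m).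

Lemma digit_unionP m z : reflect (exists2 i, bit i m & D i z) (digit_union m z).
Proof.
apply: (iffP hasP) => [[i]|[i bi Diz]]; first by rewrite mem_filter => /andP[bi _]; exists i.
by exists i => //; rewrite mem_filter bi mem_iota bit_bound.
Qed.

Lemma bits_nonnil m : 0 < m -> bits m != [::].
Proof.
move=> /bit_pos [i bi]; apply/eqP => /(congr1 (fun s => i \in s)).
by rewrite mem_filter bi mem_iota bit_bound.
Qed.

Lemma digit_union_ne m : 0 < m -> exists z, digit_union m z.
Proof.
by move=> /bit_pos [i bi]; have [z Diz] := D_ne i; exists z; apply/digit_unionP; exists i.
Qed.

Lemma digit_union_in (S : nfamily) m : (forall A B, S A -> S B -> S (setU A B)) ->
  (forall i, S (D i)) -> 0 < m -> S (digit_union m).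
Proof. by move=> SU DS m0; apply: union_seq_in => //; exact: bits_nonnil. Qed.

Lemma digit_union_disj a b :
  (forall i, ~~ (bit i a && bit i b)) -> disj (digit_union a) (digit_union b).
Proof.
move=> ab z; apply/negP => /andP[/digit_unionP [i bi Diz] /digit_unionP [j bj Djz]].
have [eij|/eqP ij] := eqVneq i j; first by subst j; have := ab i; rewrite bi bj.
by have := D_disj ij z; rewrite Diz Djz.
Qed.

End FiniteUnions.

Section SeparatedUnions.
Variables (D : nat -> nset) (x : nat -> nat).
Hypothesis D_disj : forall i j, i <> j -> disj (D i) (D j).
Hypothesis x_pos : forall n, 0 < x n.
Hypothesis x_sep : forall n, 2 ^ (\sum_(0 <= m < n) x m) %| x n.
Implicit Types (P : pred nat).

Definition block_union N (P : pred nat) : nset := digit_union D (subsum x N P).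

Lemma block_unionP N P z :
  reflect (exists n, [/\ n < N, P n & digit_union D (x n) z]) (block_union N P z).
Proof.
apply: (iffP (digit_unionP _ _ _)) => [[i]|[n [nN Pn /digit_unionP [i bi Diz]]]].
  rewrite bit_subsum // => /hasP [n]; rewrite mem_iota => /andP[_ nN] /andP[Pn bi] Diz.
  by exists n; split=> //; apply/digit_unionP; exists i.
exists i => //; rewrite bit_subsum //; apply/hasP; exists n; first by rewrite mem_iota.
by rewrite Pn.
Qed.

Lemma subsum_pos N P : has P (iota 0 N) -> 0 < subsum x N P.
Proof.
case/hasP => n; rewrite mem_iota => /andP[_ nN] Pn.
have [i bi] := bit_pos (x_pos n); apply: leq_ltn_trans (bit_bound (i := i) _) => //.
by rewrite bit_subsum //; apply/hasP; exists n; rewrite ?mem_iota ?Pn.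
Qed.

Lemma blocks_disj m n : m <> n -> disj (digit_union D (x m)) (digit_union D (x n)).
Proof.
wlog mn : m n / m < n.
  move=> sym neq; have [lt|gt|eq] := ltngtP m n; [exact: sym|move=> z|by case: neq].
  by rewrite andbC; apply: (sym n m gt); apply: nesym.
by move=> _; apply: digit_union_disj => // i; exact: bit_sep.
Qed.

Lemma block_union_disj N1 P1 N2 P2 :
  (forall n, P1 n -> ~~ P2 n) -> disj (block_union N1 P1) (block_union N2 P2).
Proof.
move=> P12 z; apply/negP.
move=> /andP[/block_unionP [m [_ P1m Fm]] /block_unionP [n [_ P2n Fn]]].
have mn : m <> n by move=> e; move: (P12 m P1m); rewrite e P2n.
by have := blocks_disj mn z; rewrite Fm Fn.
Qed.

Lemma block_unionU N1 P1 N2 P2 : setU (block_union N1 P1) (block_union N2 P2) =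
  block_union (N1 + N2) (fun n => (n < N1) && P1 n || (n < N2) && P2 n).
Proof.
apply/funext => z; apply/idP/idP.
  case/orP => /block_unionP [n [nN Pn Fn]]; apply/block_unionP; exists n.
    by rewrite nN Pn; split=> //; apply: leq_trans nN _; rewrite leq_addr.
  by rewrite nN Pn orbT; split=> //; apply: leq_trans nN _; rewrite leq_addl.
case/block_unionP => n [_ /orP[/andP[nN Pn]|/andP[nN Pn]] Fn]; apply/orP; [left|right];
  by apply/block_unionP; exists n.
Qed.

End SeparatedUnions.

Section HalfMatching.
Variables (S : nfamily) (c : nset -> nat) (D : nat -> nset) (x : nat -> nat) (k : nat).
Hypotheses (S_fin : fin_family S) (S_union : forall A B, S A -> S B -> S (setU A B)).
Hypotheses (D_S : forall i, S (D i)) (D_ne : forall i, exists z, D i z).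
Hypothesis D_disj : forall i j, i <> j -> disj (D i) (D j).
Hypothesis x_pos : forall n, 0 < x n.
Hypothesis x_sep : forall n, 2 ^ (\sum_(0 <= m < n) x m) %| x n.
Hypothesis x_col : forall N (P : pred nat), has P (iota 0 N) -> c (block_union D x N P) = k.
Implicit Types (P : pred nat).

Definition tail_blocks : nfamily := fun X =>
  exists N P, [/\ has P (iota 0 N), ~~ P 0 & X = block_union D x N P].

Definition head_block : nset := block_union D x 1 (pred1 0).

Lemma block_union_in N P : has P (iota 0 N) -> S (block_union D x N P).
Proof. by move=> hasP; apply: digit_union_in => //; exact: subsum_pos. Qed.

Lemma has_pred1 (n : nat) : has (pred1 n) (iota 0 n.+1).
Proof. by apply/hasP; exists n; rewrite ?mem_iota ?add0n /=. Qed.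

(* Tail blocks form an IP set: they are closed under union and contain the
   pairwise disjoint nonempty blocks coded by x 1, x 2, .... *)
Lemma tail_blocks_IP : IP_set tail_blocks.
Proof.
split; [|split].
- by move=> X [N [P [hasP _ ->]]]; apply: S_fin; exact: block_union_in.
- move=> X Y [N1 [P1 [has1 P10 ->]]] [N2 [P2 [has2 P20 ->]]].
  rewrite block_unionU //; eexists _, _; split; last by [].
    case/hasP: has1 => n; rewrite mem_iota => /andP[_ nN] Pn; apply/hasP; exists n.
      by rewrite mem_iota /= (leq_trans nN) ?leq_addr.
    by rewrite nN Pn.
  by rewrite /= (negbTE P10) (negbTE P20) !andbF.
- pose g n := block_union D x n.+2 (pred1 n.+1).
  have g_disj a b : a <> b -> disj (g a) (g b).
    by move=> ab; apply: block_union_disj => // n /eqP ->; apply/eqP => -[/ab].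
  exists g; split; [|split] => //.
    by move=> n; exists n.+2, (pred1 n.+1); split; first exact: has_pred1.
  move=> a b gab; apply: contrapT => ab.
  have [z gz] : exists z, g a z :=
    digit_union_ne D_ne (subsum_pos x_pos x_sep (has_pred1 a.+1)).
  by have := g_disj a b ab z; rewrite -gab gz.
Qed.

Lemma tail_blocks_minus : subfam_minus tail_blocks S 1 (fun _ => head_block).
Proof.
move=> X [N [P [hasP P0 ->]]]; split; first exact: block_union_in.
move=> i _; apply: block_union_disj => // n Pn; apply/eqP => n0.
by move: P0; rewrite -n0 Pn.
Qed.

(* Both X and head_block \cup X are block unions, hence have colour k. *)
Lemma tail_blocks_half : half_matches c 1 (fun _ => head_block) tail_blocks.
Proof.
move=> X [N [P [hasP _ ->]]]; exists 0 => //.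
by rewrite /head_block block_unionU // !x_col.
Qed.

End HalfMatching.

Lemma NU_member (S : nfamily) A : S A -> (exists z, A z) -> NU S A.
Proof.
move=> SA Ane; split=> //; exists 1, (fun _ => A); split=> // z.
by rewrite /= orbF.
Qed.

(* Colour each positive code m by c of the union it codes, pick a p-large colour
   class for an idempotent p, and apply Galvin-Glazer inside it. *)
Theorem lemma2p2 (S : nfamily) (r : nat) (c : nset -> nat) :
  IP_set S -> 1 <= r ->
  (forall A, NU S A -> 1 <= c A <= r) ->
  exists (n : nat) (g : nat -> nset) (T : nfamily),
    fin_coll_in S n g /\ IP_set T /\ subfam_minus T S n g /\
    half_matches c n g T.
Proof.
move=> ipS _ c_range; have [S_fin [S_union _]] := ipS.
have [D [D_S D_ne D_disj]] := ip_nonempty_disjoint ipS.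
have [p [pU p_mult p_idem]] := idempotent_multiples.
have [k _ pk] : exists2 k, k < r & p [set m | 0 < m /\ c (digit_union D m) = k.+1].
  apply: ultra_pigeonhole; apply: filterS (p_mult 0) => m [m0 _].
  have NUm := NU_member (digit_union_in S_union D_S m0) (digit_union_ne D_ne m0).
  have /andP[c1 cr] := c_range _ NUm.
  by exists (c (digit_union D m)).-1; rewrite ?prednK.
have [x [x_pos x_sep x_col]] := galvin_glazer pU p_mult p_idem pk.
exists 1, (fun _ => head_block D x), (tail_blocks D x); split; [|split; [|split]].
- by move=> _ _; apply: block_union_in => //; exact: has_pred1.
- by apply: (tail_blocks_IP (S := S)).
- by apply: tail_blocks_minus.
- by apply: (tail_blocks_half (k := k.+1)) => // N P /x_col [].
Qed.
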